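(* Let $n\ge 1$ and let $F_n(z)$ denote the $n$-th truncation of the continued fraction $\dfrac{1}{2z+\dfrac{1}{2z+\dfrac{1}{\ddots}}}$, i.e. $F_1(z)=\dfrac{1}{2z}$ and $F_{m+1}(z)=\dfrac{1}{2z+F_m(z)}$. Let $\theta_j=\dfrac{j\pi}{n+1}$. Then $$F_n(z)=\sum_{j=1}^n\frac{\sin^2\theta_j}{(n+1)\,(z-i\cos\theta_j)}.$$ *)

From Stdlib Require Import Reals.
From Coquelicot Require Import Coquelicot.
Open Scope R_scope.

Fixpoint cf_trunc (m : nat) (z : C) : C :=
  match m with
  | O => 0%C
  | S k => Cinv (Cplus (Cmult (RtoC 2) z) (cf_trunc k z))
  end.

From Stdlib Require Import Reals Lia Lra.
From Coquelicot Require Import Coquelicot.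
Open Scope R_scope.

(* The sequence k |-> sin (k theta_j) vanishes at k = 0 and
   k = n+1 and solves the three-term recurrence 2 w y_(k+1) = i (y_k + y_(k+2)) for
   w = i cos theta_j.  Hence y_k = sum_j sin theta_j sin (k theta_j) / ((n+1)(z - i cos theta_j))
   also vanishes at both ends and solves the recurrence for w = z, except at k = 0 where,
   by the discrete orthogonality of the sines, the residual is 1.  Running the recurrence
   backwards from y_(n+1) = 0 gives -i y_(k+1) = F_(n-k)(z) y_k, so (2z + F_(n-1)(z)) y_1 = 1,
   i.e. F_n(z) = y_1.  The same backward argument applied to sin (k theta_j) shows that
   z = i cos theta_j would force F_n(z) * 0 = sin theta_j > 0, so the denominators never vanish. *)

Lemma sum_n_m_RtoC (f : nat -> R) m n :
  sum_n_m (fun j => RtoC (f j)) m n = RtoC (sum_n_m f m n).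
Proof.
  induction n as [|n IH].
  - destruct m; [rewrite !sum_n_n | rewrite !sum_n_m_zero by lia]; reflexivity.
  - destruct (Nat.le_gt_cases m (S n)) as [Hm | Hm].
    + rewrite !sum_n_Sm, IH by lia. symmetry. apply RtoC_plus.
    + rewrite !sum_n_m_zero by lia. reflexivity.
Qed.

Lemma sum_n_m_Rminus (f g : nat -> R) m n :
  sum_n_m (fun j => f j - g j) m n = sum_n_m f m n - sum_n_m g m n.
Proof.
  induction n as [|n IH].
  - destruct m; [rewrite !sum_n_n; reflexivity |].
    rewrite !sum_n_m_zero by lia. symmetry. apply Rminus_diag.
  - destruct (Nat.le_gt_cases m (S n)) as [Hm | Hm].
    + rewrite !sum_n_Sm, IH by lia. unfold plus; simpl. ring.
    + rewrite !sum_n_m_zero by lia. symmetry. apply Rminus_diag.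
Qed.

Lemma sin_frac_PI_pos a b : 0 < a -> a < b -> 0 < sin (a * PI / b).
Proof.
  intros Ha Hab. pose proof PI_RGT_0. apply sin_gt_0.
  - apply Rdiv_lt_0_compat; nra.
  - apply (Rmult_lt_reg_r b); [lra |].
    replace (a * PI / b * b) with (a * PI) by (field; lra). nra.
Qed.

Lemma sin_INR_mul_PI_add m x : sin (INR m * PI + x) = (-1) ^ m * sin x.
Proof.
  induction m as [|m IH].
  - simpl. rewrite Rmult_0_l, Rplus_0_l. ring.
  - rewrite S_INR. replace ((INR m + 1) * PI + x) with ((INR m * PI + x) + PI) by ring.
    rewrite neg_sin, IH. simpl. ring.
Qed.

Lemma two_sin_mul_sin_succ k x :
  2 * sin x * sin (INR (S k) * x) = cos (INR k * x) - cos (INR (S (S k)) * x).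
Proof.
  rewrite !S_INR.
  replace (INR k * x) with ((INR k + 1) * x - x) by ring.
  replace ((INR k + 1 + 1) * x) with ((INR k + 1) * x + x) by ring.
  rewrite cos_minus, cos_plus. ring.
Qed.

Lemma sin_add_sin_succ_succ k x :
  sin (INR k * x) + sin (INR (S (S k)) * x) = 2 * cos x * sin (INR (S k) * x).
Proof.
  rewrite !S_INR.
  replace (INR k * x) with ((INR k + 1) * x - x) by ring.
  replace ((INR k + 1 + 1) * x) with ((INR k + 1) * x + x) by ring.
  rewrite sin_minus, sin_plus. ring.
Qed.

Lemma sum_cos_mul_telescope b n :
  2 * sin (b / 2) * sum_n_m (fun j => cos (INR j * b)) 1 n =
  sin ((INR n + / 2) * b) - sin (b / 2).
Proof.
  induction n as [|n IH].
  - rewrite sum_n_m_zero by lia. simpl.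
    replace ((0 + / 2) * b) with (b / 2) by field. unfold zero; simpl. ring.
  - rewrite sum_n_Sm by lia. change (@plus R_AbelianMonoid) with Rplus.
    rewrite Rmult_plus_distr_l, IH, S_INR.
    replace ((INR n + / 2) * b) with ((INR n + 1) * b - b / 2) by field.
    replace ((INR n + 1 + / 2) * b) with ((INR n + 1) * b + b / 2) by field.
    rewrite sin_minus, sin_plus. ring.
Qed.

Definition theta (n j : nat) : R := INR j * PI / INR (n + 1).

Lemma sin_theta_pos n j : (1 <= j <= n)%nat -> 0 < sin (theta n j).
Proof. intros Hj. apply sin_frac_PI_pos; [apply lt_0_INR | apply lt_INR]; lia. Qed.

Lemma sin_succ_mul_theta n j : sin (INR (S n) * theta n j) = 0.
Proof.
  assert (HN : 0 < INR (n + 1)) by (apply lt_0_INR; lia).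
  replace (INR (S n) * theta n j) with (INR j * PI + 0).
  - rewrite sin_INR_mul_PI_add, sin_0. ring.
  - unfold theta. rewrite <- Nat.add_1_r. field. lra.
Qed.

(* Telescoping with the step [sin (b/2)] needs [sin (b/2) <> 0], whence the bound on [m]. *)
Lemma sum_cos_mul_theta n m : (0 < m < 2 * (n + 1))%nat ->
  sum_n_m (fun j => cos (INR m * theta n j)) 1 n = - (1 + (-1) ^ m) / 2.
Proof.
  intros Hm.
  assert (HN : 0 < INR (n + 1)) by (apply lt_0_INR; lia).
  set (b := INR m * PI / INR (n + 1)).
  rewrite (sum_n_m_ext _ (fun j => cos (INR j * b))).
  2:{ intros j. unfold theta, b. f_equal. field. lra. }
  assert (Hsin : 0 < sin (b / 2)).
  { replace (b / 2) with (INR m * PI / INR (2 * (n + 1))).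
    - apply sin_frac_PI_pos; [apply lt_0_INR | apply lt_INR]; lia.
    - unfold b. rewrite mult_INR. simpl. field. lra. }
  apply (Rmult_eq_reg_l (2 * sin (b / 2))); [| lra].
  rewrite sum_cos_mul_telescope.
  replace ((INR n + / 2) * b) with (INR m * PI + - (b / 2)).
  - rewrite sin_INR_mul_PI_add, sin_neg. field.
  - unfold b. rewrite plus_INR. pose proof (pos_INR n). simpl. field. lra.
Qed.

Lemma sum_sin_mul_sin_theta n k : (k < n)%nat ->
  sum_n_m (fun j => 2 * sin (theta n j) * sin (INR (S k) * theta n j)) 1 n =
  match k with O => INR (n + 1) | S _ => 0 end.
Proof.
  intros Hk.
  rewrite (sum_n_m_ext _ _ _ _ (fun j => two_sin_mul_sin_succ k (theta n j))).
  rewrite sum_n_m_Rminus, (sum_cos_mul_theta n (S (S k))) by lia.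
  destruct k as [|k].
  - rewrite (sum_n_m_ext _ (fun _ => 1)).
    + rewrite sum_n_m_const, Nat.sub_1_r, plus_INR. simpl. field.
    + intros j. simpl. rewrite Rmult_0_l. apply cos_0.
  - rewrite sum_cos_mul_theta by lia. simpl. field.
Qed.

Lemma Ci_sqr : (Ci * Ci = -1)%C.
Proof. apply injective_projections; simpl; ring. Qed.

Definition three_term (z : C) (y : nat -> C) (k : nat) : C :=
  (2 * z * y (S k) - Ci * (y k + y (S (S k))))%C.

Lemma three_term_sum_n_m z (f : nat -> nat -> C) n k :
  three_term z (fun i => sum_n_m (fun j => f j i) 1 n) k =
  sum_n_m (fun j => three_term z (f j) k) 1 n.
Proof.
  unfold three_term. induction n as [|n IH].
  - rewrite !sum_n_m_zero by lia. change (@zero C_AbelianMonoid) with (RtoC 0). ring.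
  - rewrite !sum_n_Sm, <- IH by lia. change (@plus C_AbelianMonoid) with Cplus. ring.
Qed.

Lemma three_term_sin z x c k :
  three_term z (fun i => c * sin (INR i * x))%C k =
  (c * 2 * (z - Ci * cos x) * sin (INR (S k) * x))%C.
Proof.
  unfold three_term.
  replace (sin (INR k * x)) with (2 * cos x * sin (INR (S k) * x) - sin (INR (S (S k)) * x))
    by (rewrite <- sin_add_sin_succ_succ; ring).
  rewrite RtoC_minus, !RtoC_mult. ring.
Qed.

Section BackwardRecurrence.

Variables (n : nat) (z : C) (y : nat -> C).
Hypothesis hdef : forall m, (m < n)%nat -> (2 * z + cf_trunc m z)%C <> 0%C.
Hypothesis y_last : y (S n) = 0%C.
Hypothesis y_rec : forall k, (1 <= k)%nat -> (k < n)%nat -> three_term z y k = 0%C.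

Lemma cf_trunc_ratio m k : (m < n)%nat -> (k + m = n)%nat ->
  (- Ci * y (S k) = cf_trunc m z * y k)%C.
Proof.
  revert k; induction m as [|m IH]; intros k Hm Hkm.
  - replace k with n by lia. rewrite y_last. simpl. ring.
  - assert (Hrec := y_rec k ltac:(lia) ltac:(lia)). unfold three_term in Hrec.
    assert (Hnext := IH (S k) ltac:(lia) ltac:(lia)).
    assert (Hkey : ((2 * z + cf_trunc m z) * (- Ci * y (S k)) = y k)%C).
    { transitivity (- Ci * (2 * z * y (S k) - Ci * (y k + y (S (S k)))) - Ci * Ci * y k
                    + Ci * (- Ci * y (S (S k)) - cf_trunc m z * y (S k)))%C; [ring |].
      rewrite Hrec, Hnext, Ci_sqr. ring. }
    simpl cf_trunc. rewrite <- Hkey. field. exact (hdef m ltac:(lia)).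
Qed.

Lemma cf_trunc_mul_three_term : (1 <= n)%nat -> y 0 = 0%C ->
  (cf_trunc n z * three_term z y 0 = y 1%nat)%C.
Proof.
  intros hn y_first.
  assert (Hratio := cf_trunc_ratio (pred n) 1 ltac:(lia) ltac:(lia)).
  assert (Hden := hdef (pred n) ltac:(lia)).
  replace (cf_trunc n z) with (/ (2 * z + cf_trunc (pred n) z))%C
    by (destruct n; [lia | reflexivity]).
  unfold three_term. rewrite y_first.
  replace (2 * z * y 1%nat - Ci * (0 + y 2%nat))%C
    with ((2 * z + cf_trunc (pred n) z) * y 1%nat)%C.
  - field. exact Hden.
  - transitivity (2 * z * y 1%nat + cf_trunc (pred n) z * y 1%nat)%C; [ring |].
    rewrite <- Hratio. ring.
Qed.

End BackwardRecurrence.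

Section Resolvent.

Variables (n : nat) (z : C).
Hypothesis hdef : forall m, (m < n)%nat -> (2 * z + cf_trunc m z)%C <> 0%C.

Lemma cf_trunc_no_pole j : (1 <= j <= n)%nat -> (z - Ci * cos (theta n j))%C <> 0%C.
Proof.
  intros Hj Hz.
  set (e := fun i => (1 * sin (INR i * theta n j))%C).
  assert (He : (cf_trunc n z * three_term z e 0 = e 1%nat)%C).
  { apply cf_trunc_mul_three_term; [exact hdef | | | lia |].
    - unfold e. rewrite sin_succ_mul_theta. ring.
    - intros k _ _. unfold e. rewrite three_term_sin, Hz. ring.
    - unfold e. simpl INR. rewrite Rmult_0_l, sin_0. ring. }
  assert (Hzero : RtoC (sin (theta n j)) = RtoC 0).
  { transitivity (e 1%nat).
    - unfold e. change (INR 1) with 1. rewrite Rmult_1_l. ring.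
    - rewrite <- He. unfold e. rewrite three_term_sin, Hz. ring. }
  apply (f_equal Re) in Hzero. simpl in Hzero.
  pose proof (sin_theta_pos n j Hj). lra.
Qed.

Definition resolvent (k : nat) : C :=
  sum_n_m (fun j => (sin (theta n j) / (INR (n + 1) * (z - Ci * cos (theta n j)))
                     * sin (INR k * theta n j))%C) 1 n.

Lemma resolvent_vanishes k : (forall j, sin (INR k * theta n j) = 0) -> resolvent k = 0%C.
Proof.
  intros Hk. unfold resolvent.
  rewrite (sum_n_m_ext _ (fun _ => zero)); [apply (sum_n_m_const_zero (G := C_AbelianMonoid)) |].
  intros j. rewrite Hk. apply Cmult_0_r.
Qed.

Lemma three_term_resolvent k : (k < n)%nat ->
  three_term z resolvent k = RtoC (match k with O => 1 | S _ => 0 end).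
Proof.
  intros Hk.
  assert (HN : 0 < INR (n + 1)) by (apply lt_0_INR; lia).
  unfold resolvent. rewrite three_term_sum_n_m.
  rewrite (sum_n_m_ext_loc _
    (fun j => RtoC (/ INR (n + 1) * (2 * sin (theta n j) * sin (INR (S k) * theta n j))))).
  - rewrite sum_n_m_RtoC, (sum_n_m_mult_l (K := R_Ring)), sum_sin_mul_sin_theta by exact Hk.
    f_equal. destruct k; [apply Rinv_l; lra | apply Rmult_0_r].
  - intros j Hj. match goal with |- ?x = ?y => change (@eq C x y) end.
    assert (Hd := cf_trunc_no_pole j Hj).
    assert (HNC : RtoC (INR (n + 1)) <> 0%C).
    { intros HN0. apply (f_equal Re) in HN0. simpl in HN0. lra. }
    rewrite three_term_sin, !RtoC_mult, RtoC_inv by lra.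
    field. split; assumption.
Qed.

Lemma cf_trunc_eq_resolvent : (1 <= n)%nat -> cf_trunc n z = resolvent 1.
Proof.
  intros hn.
  rewrite <- (cf_trunc_mul_three_term n z resolvent hdef); [| | | exact hn |].
  - rewrite three_term_resolvent by lia. symmetry. apply Cmult_1_r.
  - apply resolvent_vanishes. apply sin_succ_mul_theta.
  - intros k Hk1 Hkn. rewrite three_term_resolvent by lia.
    destruct k; [lia | reflexivity].
  - apply resolvent_vanishes. intros j. simpl INR. rewrite Rmult_0_l. apply sin_0.
Qed.

End Resolvent.

Theorem lemma2 (n : nat) (z : C) (hn : (1 <= n)%nat)
  (hdef : forall m : nat, (m < n)%nat ->
            Cplus (Cmult (RtoC 2) z) (cf_trunc m z) <> RtoC 0) :
  cf_trunc n z =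
  sum_n_m (fun j : nat =>
      Cdiv (RtoC (sin (INR j * PI / INR (n + 1)) ^ 2))
           (Cmult (RtoC (INR (n + 1)))
                  (Cminus z (Cmult Ci (RtoC (cos (INR j * PI / INR (n + 1))))))))
    1 n.
Proof.
  rewrite (cf_trunc_eq_resolvent n z hdef hn).
  apply sum_n_m_ext. intros j. match goal with |- ?x = ?y => change (@eq C x y) end.
  change (INR 1) with 1. rewrite Rmult_1_l, RtoC_pow.
  unfold theta, Cdiv. ring.
Qed.
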